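(* Let $R=(g(x),f(x))$ be a Riordan matrix with positive main diagonal entries, and let $I$ be the infinite identity matrix. Then $R+I$ is a Riordan matrix if and only if $f(x)=x$.
   Context: A Riordan matrix $(g(x),f(x))$, with formal power series $g(x)=g_0+g_1x+\cdots$, $g_0\ne0$, and $f(x)=f_1x+f_2x^2+\cdots$, $f_1\ne0$, is the infinite lower triangular matrix (indices $0,1,2,\ldots$) whose $j$-th column has generating function $g(x)f(x)^j$; its main diagonal entries are $g_0f_1^j$. *)

(* Formal power series over a real field R are represented
   by their coefficient sequences nat -> R; infinite lower-triangular
   matrices (indices 0,1,2,...) by functions nat -> nat -> R. *)
From mathcomp Require Import all_boot all_order all_algebra.
Set Implicit Arguments. Unset Strict Implicit. Unset Printing Implicit Defensive.
Import Order.TTheory GRing.Theory Num.Theory.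
Local Open Scope ring_scope.

Definition fps (R : realFieldType) := nat -> R.

Definition fps_mul (R : realFieldType) (a b : fps R) : fps R :=
  fun n => \sum_(i < n.+1) a i * b (n - i)%N.

Definition fps_one (R : realFieldType) : fps R := fun n => (n == 0%N)%:R.

Definition fps_X (R : realFieldType) : fps R := fun n => (n == 1%N)%:R.

Definition fps_pow (R : realFieldType) (f : fps R) (k : nat) : fps R :=
  iter k (fps_mul f) (fps_one R).

Definition riordan_pair (R : realFieldType) (g f : fps R) : Prop :=
  g 0%N != 0 /\ f 0%N = 0 /\ f 1%N != 0.

Definition riordan (R : realFieldType) (g f : fps R) : nat -> nat -> R :=
  fun n j => fps_mul g (fps_pow f j) n.

Definition is_riordan (R : realFieldType) (M : nat -> nat -> R) : Prop :=
  exists g f : fps R, riordan_pair g f /\ forall n j, M n j = riordan g f n j.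

Definition idmat (R : realFieldType) : nat -> nat -> R := fun n j => (n == j)%:R.

(* If R + I = (g', f'), its columns 0, 1, 2 give g' = g + 1, g' f' = g f + x
   and g' f'^2 = g f^2 + x^2, so g (f - x)^2 = (g + 1)(g f^2 + x^2) - (g f + x)^2
   vanishes; since g_0 <> 0, x^(2n+2) | g (f - x)^2 forces x^(n+1) | f - x.
   Conversely (g + 1, x) = (g, x) + I, and g_0 + 1 <> 0 because g_0 = R_00 > 0.
   All power series identities are checked on truncations in {poly R}. *)
From mathcomp Require Import all_boot all_order all_algebra.
From mathcomp Require Import ring.
Import Order.TTheory GRing.Theory Num.Theory.
Local Open Scope ring_scope.

Set Implicit Arguments. Unset Strict Implicit.

Section XnDivisibility.
Variable R : fieldType.
Implicit Types p d G F u x : {poly R}.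

Lemma dvdp_XnP n p : reflect (forall i, (i < n)%N -> p`_i = 0) ('X^n %| p).
Proof.
apply: (iffP idP) => [/dvdpP [q ->] i lt_in | p_low].
  by rewrite coefMXn lt_in.
have take0 : take_poly n p = 0.
  by apply/polyP => i; rewrite coef_take_poly coef0; case: ifP => // /p_low.
by rewrite -(poly_take_drop n p) take0 add0r dvdp_mull.
Qed.

Lemma coprimep_Xn n G : G`_0 != 0 -> coprimep 'X^n G.
Proof.
move=> G0; rewrite coprimep_sym coprimep_expr //.
by rewrite -[X in coprimep _ X]subr0 -polyC0 coprimep_XsubC rootE horner_coef0.
Qed.

Lemma dvdp_Xn_mul_sqr n G u : G`_0 != 0 -> 'X^(n.*2) %| G * u ^+ 2 -> 'X^n %| u.
Proof.
move=> G0; rewrite Gauss_dvdpr ?coprimep_Xn // -muln2 exprM.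
by rewrite dvdp_pexp2r.
Qed.

Lemma dvdp_columns_sqr d G F (G' F' : {poly R}) x :
    (forall j, d %| G * F ^+ j + x ^+ j - G' * F' ^+ j) ->
  d %| G * (F - x) ^+ 2.
Proof.
move=> dvd_col; pose D j := G * F ^+ j + x ^+ j - G' * F' ^+ j.
(* (G + 1)(G F^2 + x^2) - (G F + x)^2, with G + 1 = D 0 + G' and
   G F^j + x^j = D j + G' F'^j *)
have -> : G * (F - x) ^+ 2 = D 0%N * D 2%N + D 0%N * (G' * F' ^+ 2) + G' * D 2%N
                             - D 1%N * D 1%N - D 1%N * (G' * F' *+ 2).
  by rewrite /D; ring.
repeat (apply: dvdp_sub || apply: dvdp_add).
all: by [apply/dvdp_mulr/dvd_col | apply/dvdp_mull/dvd_col].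
Qed.

End XnDivisibility.

Section Truncation.
Variable R : realFieldType.
Implicit Types (a b g f : fps R) (p q G F : {poly R}).

Definition coef_agree N a p := forall m, (m < N)%N -> a m = p`_m.

Lemma coef_agree_poly N a : coef_agree N a (\poly_(i < N) a i).
Proof. by move=> m lt_mN; rewrite coef_poly lt_mN. Qed.

Lemma coef_agree_one N : coef_agree N (fps_one R) 1.
Proof. by move=> m _; rewrite coef1. Qed.

Lemma coef_agree_add N a b p q : coef_agree N a p -> coef_agree N b q ->
  coef_agree N (fun m => a m + b m) (p + q).
Proof. by move=> ap bq m lt_mN; rewrite coefD ap ?bq. Qed.

Lemma coef_agree_mul N a b p q : coef_agree N a p -> coef_agree N b q ->
  coef_agree N (fps_mul a b) (p * q).
Proof.
move=> ap bq m lt_mN; rewrite /fps_mul coefM; apply: eq_bigr => i _.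
have le_im : (i <= m)%N by rewrite -ltnS.
by rewrite ap ?bq // (leq_ltn_trans _ lt_mN) ?leq_subr.
Qed.

Lemma coef_agree_pow N f F j : coef_agree N f F -> coef_agree N (fps_pow f j) (F ^+ j).
Proof.
move=> fF; elim: j => [|j IHj]; first exact: coef_agree_one.
by rewrite /fps_pow iterS exprS; apply: coef_agree_mul.
Qed.

Lemma coef_agree_riordan N g f G F j : coef_agree N g G -> coef_agree N f F ->
  coef_agree N (riordan g f ^~ j) (G * F ^+ j).
Proof. by move=> gG fF; apply/coef_agree_mul/coef_agree_pow. Qed.

Lemma riordan00 g f : riordan g f 0 0 = g 0%N.
Proof. by rewrite /riordan /fps_mul big_ord1 /fps_one mulr1. Qed.

Lemma f_eq_X_of_riordan_add_idmat g f g' f' : g 0%N != 0 ->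
    (forall n j, riordan g f n j + idmat R n j = riordan g' f' n j) ->
  forall n, f n = fps_X R n.
Proof.
move=> g0 col n; pose N := (n.+1).*2; pose T a := \poly_(i < N) a i.
have col_dvd j : 'X^N %| T g * T f ^+ j + 'X ^+ j - T g' * T f' ^+ j.
  apply/dvdp_XnP => m lt_mN; rewrite coefB coefD coefXn.
  rewrite -!(coef_agree_riordan j (@coef_agree_poly N _) (@coef_agree_poly N _) lt_mN).
  by rewrite -col subrr.
have T_g0 : (T g)`_0 != 0 by rewrite coef_poly.
have /dvdp_XnP/(_ n (ltnSn n)) := dvdp_Xn_mul_sqr T_g0 (dvdp_columns_sqr col_dvd).
have lt_nN : (n < N)%N by rewrite /N -addnn addSn ltnS leq_addr.
by rewrite coefB coefX coef_poly lt_nN => /eqP; rewrite subr_eq0 => /eqP.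
Qed.

Lemma riordan_add_one_X g f : (forall n, f n = fps_X R n) ->
  forall n j, riordan (fun m => g m + fps_one R m) f n j = riordan g f n j + idmat R n j.
Proof.
move=> fX n j; pose N := n.+1.
have f_agree_X : coef_agree N f 'X by move=> m _; rewrite fX coefX.
have g_agree := @coef_agree_poly N g.
have g1_agree := coef_agree_add g_agree (@coef_agree_one N).
rewrite (coef_agree_riordan j g1_agree f_agree_X) //.
rewrite (coef_agree_riordan j g_agree f_agree_X) //.
by rewrite mulrDl mul1r coefD coefXn.
Qed.

End Truncation.

Theorem lemma5p2 (R : realFieldType) (g f : fps R) :
  riordan_pair g f ->
  (forall j : nat, 0 < riordan g f j j) ->
  (is_riordan (fun n j => riordan g f n j + idmat R n j) <->
   forall n : nat, f n = fps_X R n).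
Proof.
move=> [g0 [f0 f1]] diag_pos; split.
  by case=> g' [f' [_ col]]; apply: f_eq_X_of_riordan_add_idmat g0 _ => n j; rewrite col.
move=> fX; exists (fun m => g m + fps_one R m), f; split.
  have g0_pos : 0 < g 0%N by rewrite -(riordan00 g f).
  by split=> //; rewrite /fps_one eqxx lt0r_neq0 // ltr_wpDr.
by move=> n j; rewrite riordan_add_one_X.
Qed.
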